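(* Consider the uniform case $\pi^\ell=\mathbf 1/K$. Let $t\in[0,1]$ with $\alpha_t<1$, let $\mathbf x_t\in\mathsf X$, $\ell\in\{1,\dots,L\}$, and write $\mathbf x_t^\ell=e_k$. Set $\nu:=\hat{\mathbf x}^{\mathrm{loo}}_0(\mathbf x_t,t)^\ell$ and $\mu:=\sum_x p^\ell_{0|t}(x\mid\mathbf x_t)\,x$ (the denoiser vector). Then: (i) $$\mu=\frac{(1-\alpha_t)\nu+K\alpha_t\,\nu_k\, e_k}{1-\alpha_t+K\alpha_t\nu_k},$$ and $$\nu=\frac{(1+(K-1)\alpha_t)\mu-K\alpha_t\,\mu_k\,e_k}{1+(K-1)\alpha_t-K\alpha_t\mu_k},$$ where $\nu_k=\langle e_k,\nu\rangle$ and $\mu_k=\langle e_k,\mu\rangle$. (ii) In particular, if $\nu=\mathrm{softmax}(f)$ for some $f\in\mathbb R^K$, then $$\mu=\mathrm{softmax}\Big(f+\log\big(1+\tfrac{K\alpha_t}{1-\alpha_t}\big)\,e_k\Big).$$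
   Context: **Setup.** - Let $K\ge2$, $L\ge1$ and $\mathsf V=\{1,\dots,K\}$. Tokens are identified with the standard basis vectors $e_1,\dots,e_K$ of $\mathbb R^K$. - $\mathsf X=\mathsf V^L$. For $\mathbf x\in\mathsf X$, $\mathbf x^\ell$ is its $\ell$-th token and $\mathbf x^{-\ell}$ denotes the other tokens. - $p_0$ is a distribution on $\mathsf X$. - $\alpha:[0,1]\to[0,1]$ is nonincreasing with $\alpha_0=1$. - Uniform forward kernel: $q^\ell_{t|0}(x_t\mid x_0)=\langle x_t,\alpha_t x_0+(1-\alpha_t)\mathbf 1/K\rangle$, factorized over positions. - $X_0\sim p_0$ and $X_t\mid X_0\sim q_{t|0}(\cdot\mid X_0)$. **Posteriors.** - $p^\ell_{0|t}(x\mid\mathbf x_t)=\mathbb P(X_0^\ell=x\mid X_t=\mathbf x_t)$. - $\hat{\mathbf x}^{\mathrm{loo}}_0(\mathbf x_t,t)^\ell=\mathbb E[X_0^\ell\mid X_t^{-\ell}=\mathbf x_t^{-\ell}]$. - When $\alpha_t<1$, every state has positive probability under the law of $X_t$. *)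

From HB Require Import structures.
From mathcomp Require Import all_boot all_order all_algebra.
From mathcomp Require Import all_classical all_reals all_analysis.
Set Implicit Arguments. Unset Strict Implicit. Unset Printing Implicit Defensive.
Import Order.TTheory GRing.Theory Num.Theory.
Local Open Scope ring_scope.

(* Sequences x in X = V^L, V = 'I_K (token j <-> basis vector e_j). *)
Definition seqX (K L : nat) := {ffun 'I_L -> 'I_K}.

Definition evec (R : ringType) (K : nat) (k : 'I_K) : 'rV[R]_K :=
  \row_j (j == k)%:R.

Definition softmax (R : realType) (K : nat) (f : 'rV[R]_K) : 'rV[R]_K :=
  \row_j (expR (f 0 j) / \sum_(i < K) expR (f 0 i)).

(* uniform forward kernel q_{t|0}(xt | x0) with a = alpha_t, factorized over positions:
   q^l(xt^l | x0^l) = <xt^l, a x0^l + (1-a) 1/K> *)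
Definition qkern (R : realType) (K L : nat) (a : R) (xt x0 : seqX K L) : R :=
  \prod_(l < L) (a * (xt l == x0 l)%:R + (1 - a) / K%:R).

Definition joint (R : realType) (K L : nat) (p0 : seqX K L -> R) (a : R)
  (x0 xt : seqX K L) : R := p0 x0 * qkern a xt x0.

Definition pXt (R : realType) (K L : nat) (p0 : seqX K L -> R) (a : R)
  (xt : seqX K L) : R := \sum_(x0 : seqX K L) joint p0 a x0 xt.

Definition posterior (R : realType) (K L : nat) (p0 : seqX K L -> R) (a : R)
  (l : 'I_L) (xt : seqX K L) (j : 'I_K) : R :=
  (\sum_(x0 : seqX K L | x0 l == j) joint p0 a x0 xt) / pXt p0 a xt.

(* denoiser vector mu = sum_x p^l_{0|t}(x | xt) x *)
Definition denoiser (R : realType) (K L : nat) (p0 : seqX K L -> R) (a : R)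
  (l : 'I_L) (xt : seqX K L) : 'rV[R]_K :=
  \row_j posterior p0 a l xt j.

Definition agree_off (K L : nat) (l : 'I_L) (xt y : seqX K L) : bool :=
  [forall m : 'I_L, (m != l) ==> (y m == xt m)].

(* leave-one-out denoiser: E[X0^l | Xt^{-l} = xt^{-l}], whose j-th coordinate is
   P(X0^l = j, Xt^{-l} = xt^{-l}) / P(Xt^{-l} = xt^{-l}) *)
Definition xloo (R : realType) (K L : nat) (p0 : seqX K L -> R) (a : R)
  (l : 'I_L) (xt : seqX K L) : 'rV[R]_K :=
  \row_j ((\sum_(x0 : seqX K L | x0 l == j)
             \sum_(y : seqX K L | agree_off l xt y) joint p0 a x0 y)
          / (\sum_(x0 : seqX K L)
             \sum_(y : seqX K L | agree_off l xt y) joint p0 a x0 y)).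

From HB Require Import structures.
From mathcomp Require Import all_boot all_order all_algebra.
From mathcomp Require Import all_classical all_reals all_analysis.
From mathcomp Require Import ring lra.
Import Order.TTheory GRing.Theory Num.Theory.
Set Implicit Arguments. Unset Strict Implicit.
Local Open Scope ring_scope.

(* Observing only X_t^{-l}, the law of X_0^l is nu.  Observing X_t^l = e_k as
   well multiplies the weight of X_0^l = e_j by q(e_k | e_j), which is
   proportional to 1 + b [j = k] with b = K a / (1 - a).  Hence mu is nu
   reweighted at the single coordinate k ("tilted"), and both formulas and the
   softmax statement are elementary properties of this tilt. *)

Section Tilt.
Variables (R : fieldType) (K : nat) (k : 'I_K).

Definition tilt (b : R) (nu : 'rV[R]_K) : 'rV[R]_K :=
  (1 + b * nu 0 k)^-1 *: (nu + (b * nu 0 k) *: evec R k).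

Definition untilt (b : R) (mu : 'rV[R]_K) : 'rV[R]_K :=
  (1 + b - b * mu 0 k)^-1 *: ((1 + b) *: mu - (b * mu 0 k) *: evec R k).

Lemma tiltE b (nu : 'rV[R]_K) j :
  tilt b nu 0 j = (1 + b * (j == k)%:R) * nu 0 j / (1 + b * nu 0 k).
Proof.
rewrite !mxE mulrC; congr (_ * _).
by case: eqP => [->|_]; rewrite ?mulr1 ?mulr0 ?addr0 ?mul1r // mulrDl mul1r mulrC.
Qed.

Lemma tiltK b (nu : 'rV[R]_K) :
  1 + b != 0 -> 1 + b * nu 0 k != 0 -> untilt b (tilt b nu) = nu.
Proof.
move=> hb hnu; move: (tilt b nu) (tiltE b nu) => mu hmu.
apply/rowP => j; rewrite !mxE !hmu eqxx mulr1.
have -> : 1 + b - b * ((1 + b) * nu 0 k / (1 + b * nu 0 k)) =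
          (1 + b) / (1 + b * nu 0 k) by field.
by case: eqP => [->|_]; rewrite ?mulr1 ?mulr0 ?addr0; field; rewrite hb hnu.
Qed.

Lemma scale_tilt s g (nu : 'rV[R]_K) : s != 0 ->
  (s + g * nu 0 k)^-1 *: (s *: nu + (g * nu 0 k) *: evec R k) = tilt (g / s) nu.
Proof.
move=> hs; have -> : s + g * nu 0 k = s * (1 + g / s * nu 0 k) by field.
have -> : s *: nu + (g * nu 0 k) *: evec R k =
          s *: (nu + (g / s * nu 0 k) *: evec R k).
  by rewrite scalerDr scalerA; congr (_ + _ *: _); field.
by rewrite scalerA invfM mulrAC mulVf ?mul1r.
Qed.

Lemma scale_untilt s g (mu : 'rV[R]_K) : s != 0 ->
  (s + g - g * mu 0 k)^-1 *: ((s + g) *: mu - (g * mu 0 k) *: evec R k) =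
  untilt (g / s) mu.
Proof.
move=> hs; have -> : s + g - g * mu 0 k = s * (1 + g / s - g / s * mu 0 k) by field.
have -> : (s + g) *: mu - (g * mu 0 k) *: evec R k =
          s *: ((1 + g / s) *: mu - (g / s * mu 0 k) *: evec R k).
  by rewrite scalerBr !scalerA; congr (_ *: _ - _ *: _); field.
by rewrite scalerA invfM mulrAC mulVf ?mul1r.
Qed.

End Tilt.

Lemma expR_ln_mul_indicator (R : realType) (b : R) (c : bool) : -1 < b ->
  expR (ln (1 + b) * c%:R) = 1 + b * c%:R.
Proof.
move=> hb; case: c; last by rewrite !mulr0 expR0 addr0.
by rewrite !mulr1 lnK // posrE; lra.
Qed.

Lemma softmax_tilt (R : realType) (K : nat) (k : 'I_K) (b : R) (f : 'rV[R]_K) :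
  -1 < b -> softmax (f + ln (1 + b) *: evec R k) = tilt k b (softmax f).
Proof.
move=> hb; set Z := \sum_(i < K) expR (f 0 i).
have hZk : expR (f 0 k) <= Z.
  by rewrite /Z (bigD1 k) //= lerDl sumr_ge0 // => i _; exact: expR_ge0.
have hexp i : expR ((f + ln (1 + b) *: evec R k) 0 i) =
              (1 + b * (i == k)%:R) * expR (f 0 i).
  by rewrite !mxE expRD expR_ln_mul_indicator // mulrC.
have hsum : \sum_(i < K) expR ((f + ln (1 + b) *: evec R k) 0 i) =
            Z + b * expR (f 0 k).
  under eq_bigr => i _ do rewrite hexp mulrDl mul1r.
  rewrite big_split /= [X in _ + X](bigD1 k) //= eqxx mulr1.
  rewrite [X in _ + (_ + X)]big1 ?addr0 //.
  by move=> i /negbTE ->; rewrite mulr0 mul0r.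
have he := expR_gt0 (f 0 k).
have hD : Z + b * expR (f 0 k) != 0 by rewrite gt_eqF //; nra.
apply/rowP => j; rewrite tiltE /softmax mxE hsum hexp !mxE -/Z.
by field; rewrite hD gt_eqF //; lra.
Qed.

Section LeaveOneOut.
Variables (R : realType) (K L : nat) (p0 : seqX K L -> R) (a : R).
Variables (l : 'I_L) (xt : seqX K L).

Definition kfactor (u v : 'I_K) : R := a * (u == v)%:R + (1 - a) / K%:R.

Definition qkern_off (x0 : seqX K L) : R :=
  \prod_(m < L | m != l) kfactor (xt m) (x0 m).

Definition upd (v : 'I_K) : seqX K L := [ffun m => if m == l then v else xt m].

Lemma upd_id : upd (xt l) = xt.
Proof. by apply/ffunP => m; rewrite ffunE; case: eqP => [->|]. Qed.

Lemma sum_agree_off (F : seqX K L -> R) :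
  \sum_(y | agree_off l xt y) F y = \sum_(v : 'I_K) F (upd v).
Proof.
rewrite (partition_big (fun y : seqX K L => y l) predT) //=.
apply: eq_bigr => v _; rewrite (big_pred1 (upd v)) // => y /=.
apply/andP/eqP => [[/forallP hy /eqP <-]| ->].
- apply/ffunP => m; rewrite ffunE; case: eqP => [->|ne] //.
  by move: (hy m) => /implyP/(_ (introN eqP ne))/eqP.
- rewrite ffunE eqxx; split=> //; apply/forallP => m; apply/implyP => /negbTE.
  by rewrite ffunE => ->.
Qed.

Lemma qkern_upd v x0 : qkern a (upd v) x0 = kfactor v (x0 l) * qkern_off x0.
Proof.
rewrite /qkern (bigD1 l) //= ffunE eqxx; congr (_ * _).
by apply: eq_bigr => m /negbTE; rewrite ffunE => ->.
Qed.

Lemma sum_kfactor j : (0 < K)%N -> \sum_(v < K) kfactor v j = 1.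
Proof.
move=> hK; rewrite big_split /= sumr_const card_ord -big_distrr /=.
rewrite (bigD1 j) //= eqxx big1 => [|i /negbTE -> //].
by rewrite addr0 mulr1 -[_ *+ K]mulr_natr mulfVK ?pnatr_eq0 -?lt0n // subrKC.
Qed.

(* P(X_0^l = e_j, X_t^{-l} = xt^{-l}): the kernel factor at l sums out to 1 *)
Definition loo_mass (j : 'I_K) : R :=
  \sum_(x0 : seqX K L | x0 l == j) p0 x0 * qkern_off x0.

Lemma sum_by_coord (F : seqX K L -> R) :
  \sum_(x0 : seqX K L) F x0 = \sum_(i < K) \sum_(x0 : seqX K L | x0 l == i) F x0.
Proof. exact: (partition_big (fun x0 : seqX K L => x0 l) predT). Qed.

Lemma xlooE : (0 < K)%N ->
  xloo p0 a l xt = \row_j (loo_mass j / \sum_i loo_mass i).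
Proof.
move=> hK.
have hoff x0 : \sum_(y | agree_off l xt y) joint p0 a x0 y = p0 x0 * qkern_off x0.
  rewrite sum_agree_off /joint; under eq_bigr => v _ do rewrite qkern_upd mulrCA.
  by rewrite -big_distrl /= sum_kfactor // mul1r.
apply/rowP => j; rewrite !mxE sum_by_coord.
by congr (_ / _); [|apply: eq_bigr => i _]; apply: eq_bigr => x0 _; rewrite hoff.
Qed.

Lemma denoiserE : denoiser p0 a l xt =
  \row_j (loo_mass j * kfactor (xt l) j / \sum_i loo_mass i * kfactor (xt l) i).
Proof.
have hmass j : \sum_(x0 : seqX K L | x0 l == j) joint p0 a x0 xt =
               loo_mass j * kfactor (xt l) j.
  rewrite /loo_mass big_distrl /=; apply: eq_bigr => x0 /eqP <-.
  by rewrite /joint -{1}upd_id qkern_upd mulrA mulrAC.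
apply/rowP => j; rewrite !mxE /posterior /pXt sum_by_coord hmass.
by congr (_ / _); apply: eq_bigr => i _; rewrite hmass.
Qed.

Hypotheses (hK : (0 < K)%N) (hp0 : forall x, 0 <= p0 x).
Hypotheses (hp0sum : \sum_(x : seqX K L) p0 x = 1) (ha0 : 0 <= a) (ha1 : a < 1).

Lemma kfactor_gt0 u v : 0 < kfactor u v.
Proof.
apply: ltr_wpDl; first by rewrite mulr_ge0 ?ler0n.
by rewrite divr_gt0 ?ltr0n // subr_gt0.
Qed.

Lemma loo_mass_ge0 j : 0 <= loo_mass j.
Proof.
apply: sumr_ge0 => x0 _; apply: mulr_ge0 => //.
by apply: prodr_ge0 => m _; exact: ltW (kfactor_gt0 _ _).
Qed.

Lemma loo_mass_sum_gt0 : 0 < \sum_i loo_mass i.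
Proof.
rewrite lt_def sumr_ge0 ?andbT => [|i _]; last exact: loo_mass_ge0.
have hw x0 : 0 < qkern_off x0 by apply: prodr_gt0 => m _; exact: kfactor_gt0.
apply/eqP; rewrite /loo_mass -sum_by_coord.
move/(psumr_eq0P (fun x _ => mulr_ge0 (hp0 x) (ltW (hw x)))) => hzero.
have : \sum_(x : seqX K L) p0 x = 0.
  by apply: big1 => x _; apply/eqP; move: (hzero x isT) => /eqP;
     rewrite mulf_eq0 (gt_eqF (hw x)) orbF.
by rewrite hp0sum => /eqP; rewrite oner_eq0.
Qed.

Lemma xloo_ge0 j : 0 <= xloo p0 a l xt 0 j.
Proof.
by rewrite xlooE // mxE divr_ge0 ?loo_mass_ge0 // ltW // loo_mass_sum_gt0.
Qed.

Lemma denoiser_tilt :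
  denoiser p0 a l xt = tilt (xt l) (K%:R * a / (1 - a)) (xloo p0 a l xt).
Proof.
set k := xt l; set S := \sum_i loo_mass i.
have hS : 0 < S := loo_mass_sum_gt0.
have hden : \sum_i loo_mass i * kfactor k i =
            a * loo_mass k + (1 - a) / K%:R * S.
  under eq_bigr => i _ do rewrite /kfactor mulrDr mulrCA (mulrC _ ((1 - a) / _)).
  rewrite big_split /= -!big_distrr /= (bigD1 k) //= eqxx mulr1 big1 ?addr0 //.
  by move=> i /negbTE; rewrite eq_sym => ->; rewrite mulr0.
have hK0 : (K%:R : R) != 0 by rewrite pnatr_eq0 -lt0n.
have h1a : 1 - a != 0 by rewrite subr_eq0 eq_sym lt_eqF.
have hD : (1 - a) * S + K%:R * a * loo_mass k != 0.
  rewrite gt_eqF // ltr_wpDr ?mulr_gt0 ?subr_gt0 //.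
  by rewrite !mulr_ge0 ?ler0n ?loo_mass_ge0.
apply/rowP => j; rewrite denoiserE tiltE xlooE // !mxE hden -/S /kfactor eq_sym.
by field; rewrite hD hK0 h1a gt_eqF.
Qed.

End LeaveOneOut.

Theorem mainTheorem4 (R : realType) (K L : nat) (hK : (2 <= K)%N) (hL : (1 <= L)%N)
  (p0 : seqX K L -> R)
  (hp0 : forall x, 0 <= p0 x) (hp0sum : \sum_(x : seqX K L) p0 x = 1)
  (alpha : R -> R)
  (halpha_range : forall s, 0 <= s <= 1 -> 0 <= alpha s <= 1)
  (halpha_mono : forall s u, 0 <= s -> s <= u -> u <= 1 -> alpha u <= alpha s)
  (halpha0 : alpha 0 = 1)
  (t : R) (ht : 0 <= t <= 1) (hat : alpha t < 1)
  (xt : seqX K L) (l : 'I_L) :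
  let a := alpha t in
  let k := xt l in
  let nu := xloo p0 a l xt in
  let mu := denoiser p0 a l xt in
  [/\ mu = (1 - a + K%:R * a * nu 0 k)^-1 *:
             ((1 - a) *: nu + (K%:R * a * nu 0 k) *: evec R k),
      nu = (1 + (K%:R - 1) * a - K%:R * a * mu 0 k)^-1 *:
             ((1 + (K%:R - 1) * a) *: mu - (K%:R * a * mu 0 k) *: evec R k)
    & forall f : 'rV[R]_K, nu = softmax f ->
      mu = softmax (f + ln (1 + K%:R * a / (1 - a)) *: evec R k)].
Proof.
move=> a k nu mu.
have /andP[ha0 _] := halpha_range t ht.
have hK0 : (0 < K)%N by exact: leq_trans hK.
have h1a : 1 - a != 0 by rewrite subr_eq0 eq_sym lt_eqF.
set b := K%:R * a / (1 - a).
have hb : 0 <= b by rewrite divr_ge0 ?mulr_ge0 ?ler0n // subr_ge0 ltW.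
have hmu : mu = tilt k b nu by exact: denoiser_tilt.
have hnuk : 0 <= nu 0 k by exact: xloo_ge0.
split.
- by rewrite hmu scale_tilt.
- have -> : 1 + (K%:R - 1) * a = 1 - a + K%:R * a by ring.
  have h1b : 1 + b != 0 by rewrite gt_eqF // ltr_wpDr.
  have h1bnu : 1 + b * nu 0 k != 0.
    by rewrite gt_eqF // (ltr_wpDr (mulr_ge0 hb hnuk)).
  by rewrite scale_untilt // hmu tiltK.
- by move=> f hf; rewrite hmu hf softmax_tilt // (lt_le_trans _ hb) ?oppr_lt0.
Qed.
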